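(* Let $x:[0,\infty)\to\mathbb{R}^m$ be of the form $x(t)=\sum_{i=0}^{n-1}y_i\,\theta_i(t)$ with vectors $y_0,\ldots,y_{n-1}\in\mathbb{R}^m$ and scalar functions $\theta_0,\ldots,\theta_{n-1}$ such that for all $t\ge 0$: (i) $\theta_i(t)\ge 0$ for all $i$; (ii) there are fixed scalars $\beta_0,\ldots,\beta_{n-1}>0$ with $\beta_i\theta_i(t)\ge\beta_j\theta_j(t)$ whenever $i\le j$; (iii) $\theta_0(t)\le 1$. Then for all $t\ge 0$, $$x(t)\in\operatorname{conv}\left\{\sum_{j=0}^{i-1}\frac{\beta_0}{\beta_j}y_j\;:\;i=0,1,\ldots,n\right\},$$ i.e. $x(t)$ lies in the convex hull of $0,\ \frac{\beta_0}{\beta_0}y_0,\ \ldots,\ \sum_{j=0}^{n-1}\frac{\beta_0}{\beta_j}y_j$.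
   Context: In the paper, $x$ is the solution of an $n$-th order linear companion system and the $y_i$ depend on its initial state, but the statement only uses the displayed representation. An empty sum is $0$; $\operatorname{conv}$ denotes convex hull. *)

From mathcomp Require Import all_boot all_order all_algebra.
Set Implicit Arguments. Unset Strict Implicit. Unset Printing Implicit Defensive.
Import Order.TTheory GRing.Theory Num.Theory.
Local Open Scope ring_scope.

Definition in_conv_hull (R : numDomainType) (V : lmodType R) (k : nat)
  (p : 'I_k -> V) (x : V) : Prop :=
  exists lam : 'I_k -> R,
    (forall i, 0 <= lam i) /\ \sum_(i < k) lam i = 1 /\
    x = \sum_(i < k) lam i *: p i.

From mathcomp Require Import all_boot all_order all_algebra.
Import Order.TTheory GRing.Theory Num.Theory.
Local Open Scope ring_scope.

(* Abel summation. If the weights w_0 >= ... >= w_(n-1) lie in [0, 1], then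
   sum_j w_j u_j = sum_i (w_(i-1) - w_i) (u_0 + ... + u_(i-1)) with the
   conventions w_(-1) = 1 and w_n = 0; the differences are nonnegative and
   telescope to 1, so this is a convex combination of the partial sums of u.
   With u_j = (beta_0 / beta_j) y_j and w_j = beta_j theta_j(t) / beta_0,
   hypotheses (i)-(iii) are exactly the conditions on w. *)

Section PartialSumsConvHull.

Variables (R : numDomainType) (V : lmodType R) (n : nat).
Variables (u : 'I_n -> V) (w : 'I_n -> R).
Hypothesis w_ge0 : forall i, 0 <= w i.
Hypothesis w_le1 : forall i, w i <= 1.
Hypothesis w_antitone : forall i j : 'I_n, (i <= j)%N -> w j <= w i.

Definition padw (k : nat) : R :=
  if k is k'.+1 then oapp w 0 (insub k') else 1.

Lemma padwS (j : 'I_n) : padw j.+1 = w j.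
Proof. by rewrite /= valK. Qed.

Lemma padw_gt (k : nat) : (n < k)%N -> padw k = 0.
Proof. by case: k => //= k; rewrite ltnS => lenk; rewrite insubN // -leqNgt. Qed.

Lemma padw_ge0 (k : nat) : 0 <= padw k.
Proof. by case: k => [|k] /=; [exact: ler01 | case: insub]. Qed.

Lemma padw_antitone (k : nat) : padw k.+1 <= padw k.
Proof.
case: k => [|k] /=; first by case: insub => //= ?; exact: ler01.
have [ltk1n | lenk1] := ltnP k.+1 n.
  have ltkn : (k < n)%N := ltnW ltk1n.
  by rewrite (insubT (ltn^~ n) ltk1n) (insubT (ltn^~ n) ltkn) /=; apply: w_antitone.
by rewrite insubN -?leqNgt //; exact: (padw_ge0 k.+1).
Qed.

Lemma sum_padw_diff (a b : nat) : (a <= b)%N ->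
  \sum_(a <= i < b) (padw i - padw i.+1) = padw a - padw b.
Proof.
by move=> leab; rewrite (telescope_sumr_eq (fun k => - padw k)) // => [|k _];
  rewrite opprK addrC.
Qed.

Lemma sum_padw_diff_gt (j : 'I_n) :
  \sum_(i < n.+1 | (j < i)%N) (padw i - padw i.+1) = w j.
Proof.
rewrite -(big_geq_mkord j.+1 n.+1 xpredT (fun i => padw i - padw i.+1)) /=.
by rewrite sum_padw_diff ?padwS ?padw_gt ?subr0 // ltnW ?ltnS.
Qed.

Lemma in_conv_hull_partial_sums :
  in_conv_hull (fun i : 'I_n.+1 => \sum_(j < n | (j < i)%N) u j)
               (\sum_(j < n) w j *: u j).
Proof.
exists (fun i => padw i - padw i.+1).
split; first by move=> i; rewrite subr_ge0 padw_antitone.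
split.
  rewrite -(big_mkord xpredT (fun i => padw i - padw i.+1)) sum_padw_diff //.
  by rewrite (@padw_gt n.+1) // oppr0 addr0.
symmetry; under eq_bigr do rewrite scaler_sumr big_mkcond.
rewrite exchange_big; apply: eq_bigr => j _.
by rewrite -big_mkcond -scaler_suml sum_padw_diff_gt.
Qed.

End PartialSumsConvHull.

Theorem proposition10 (R : realFieldType) (m n : nat)
  (y : 'I_n -> 'rV[R]_m) (theta : R -> 'I_n -> R) (beta : 'I_n -> R)
  (x : R -> 'rV[R]_m)
  (hx : forall t, 0 <= t -> x t = \sum_(i < n) theta t i *: y i)
  (hbeta : forall i, 0 < beta i)
  (hpos : forall t, 0 <= t -> forall i, 0 <= theta t i)
  (hmono : forall t, 0 <= t -> forall i j : 'I_n, (i <= j)%N ->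
             beta j * theta t j <= beta i * theta t i)
  (h0 : forall t, 0 <= t -> forall i0 : 'I_n, val i0 = 0%N -> theta t i0 <= 1) :
  forall t, 0 <= t ->
    in_conv_hull
      (fun i : 'I_n.+1 =>
         \sum_(j < n | (j < i)%N)
            ((\sum_(k < n | val k == 0%N) beta k) / beta j) *: y j)
      (x t).
Proof.
move=> t ht; set c := \sum_(k < n | _) _.
pose first (j : 'I_n) : 'I_n := Ordinal (leq_ltn_trans (leq0n j) (ltn_ord j)).
have c_beta0 (j : 'I_n) : c = beta (first j).
  by rewrite /c; apply: big_pred1 => k; rewrite /= -val_eqE.
have c_gt0 (j : 'I_n) : 0 < c by rewrite (c_beta0 j).
pose w j := beta j * theta t j / c.
have w_ge0 j : 0 <= w j.
  by rewrite divr_ge0 ?mulr_ge0 ?(ltW (hbeta j)) ?(ltW (c_gt0 j)) ?hpos.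
have w_le1 j : w j <= 1.
  rewrite /w ler_pdivrMr ?(c_gt0 j) // mul1r (c_beta0 j).
  apply: le_trans (hmono t ht (first j) j (leq0n j)) _.
  by rewrite ler_piMr ?(ltW (hbeta _)) ?h0.
have w_antitone (i j : 'I_n) : (i <= j)%N -> w j <= w i.
  by move=> leij; rewrite /w ler_pM2r ?invr_gt0 ?(c_gt0 j) //; exact: hmono.
have -> : x t = \sum_(j < n) w j *: ((c / beta j) *: y j).
  rewrite hx //; apply: eq_bigr => j _; rewrite scalerA; congr (_ *: _).
  by rewrite /w mulrA divfK ?gt_eqF ?(c_gt0 j) // mulrC mulKf ?gt_eqF.
exact: in_conv_hull_partial_sums.
Qed.
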